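(* Let $F:\mathbb{R}^d\to\mathbb{R}^d$ be $L$-Lipschitz, $G:\mathbb{R}^d\rightrightarrows\mathbb{R}^d$ maximally monotone, the solution set of $0\in F(x)+G(x)$ nonempty, and let $x^\star$ be a solution with $\langle u,x-x^\star\rangle\ge-\rho\|u\|^2$ for all $(x,u)$ in the graph of $F+G$, where $0<\rho<\eta$. Let $\alpha=1-\frac\rho\eta$, $\alpha_k=\frac{\alpha}{\sqrt{k+2}\log(k+3)}$, and let $(x_k)$ be random iterates with $x_{k+1}=(1-\alpha_k)x_k+\alpha_k\widetilde J_{\eta(F+G)}(x_k)$, where the random points $\widetilde J_{\eta(F+G)}(x_k)$ satisfy $\mathbb{E}_k\|\widetilde J_{\eta(F+G)}(x_k)-J_{\eta(F+G)}(x_k)\|^2\le\varepsilon_{k,v}^2$ and $\|\mathbb{E}_k[\widetilde J_{\eta(F+G)}(x_k)]-J_{\eta(F+G)}(x_k)\|\le\varepsilon_{k,b}$. Then $$\frac\alpha4\sum_{k=0}^{K-1}\alpha_k\mathbb{E}\|(\mathrm{Id}-J_{\eta(F+G)})(x_k)\|^2\le\frac12\|x_0-x^\star\|^2+\frac32\sum_{k=0}^{K-1}\alpha_k^2\mathbb{E}[\varepsilon_{k,v}^2]+\sum_{k=0}^{K-1}\alpha_k\mathbb{E}\big[\|x_k-x^\star\|\varepsilon_{k,b}\big].$$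
   Context: For an operator $A$, $J_A=(\mathrm{Id}+A)^{-1}$. $\mathbb{E}_k$ denotes expectation conditioned on the randomness of $x_1,\dots,x_k$; $\varepsilon_{k,v},\varepsilon_{k,b}$ may be random quantities measurable with respect to that conditioning. *)

From HB Require Import structures.
From mathcomp Require Import all_boot all_order all_algebra.
From mathcomp Require Import all_classical all_reals all_analysis.
Set Implicit Arguments. Unset Strict Implicit. Unset Printing Implicit Defensive.
Import Order.TTheory GRing.Theory Num.Theory.
Local Open Scope classical_set_scope.
Local Open Scope ring_scope.

Definition dotv {R : realType} {d : nat} (u v : 'rV[R]_d) : R :=
  \sum_(i < d) u 0 i * v 0 i.
Definition normv {R : realType} {d : nat} (u : 'rV[R]_d) : R :=
  Num.sqrt (dotv u u).

Definition lipschitz_with {R : realType} {d : nat} (L : R)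
  (F : 'rV[R]_d -> 'rV[R]_d) : Prop :=
  forall x y, normv (F x - F y) <= L * normv (x - y).

Definition setop (R : realType) (d : nat) := 'rV[R]_d -> set 'rV[R]_d.

Definition monotone_op {R : realType} {d : nat} (G : setop R d) : Prop :=
  forall x y u v, G x u -> G y v -> 0 <= dotv (u - v) (x - y).

Definition maximally_monotone {R : realType} {d : nat} (G : setop R d) : Prop :=
  monotone_op G /\
  forall G' : setop R d, monotone_op G' ->
    (forall x u, G x u -> G' x u) -> forall x u, G' x u -> G x u.

Definition add_op {R : realType} {d : nat} (F : 'rV[R]_d -> 'rV[R]_d)
  (G : setop R d) : setop R d :=
  fun x => [set F x + u | u in G x].

(* y is a value of the resolvent J_{eta A} = (Id + eta A)^{-1} at x,
   i.e. x \in y + eta A(y) *)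
Definition resolvent_at {R : realType} {d : nat} (eta : R) (A : setop R d)
  (x y : 'rV[R]_d) : Prop :=
  exists u, A y u /\ x = y + eta *: u.

(* sigma-algebra on Omega generated by the random vectors x_0, ..., x_k
   (R^d carries the Borel sigma-algebra = product of the coordinate ones) *)
Definition gen_sets {R : realType} {d : nat} {T : Type}
  (x : nat -> T -> 'rV[R]_d) (k : nat) : set_system T :=
  [set A | exists i j (B : set R),
      (i <= k)%N /\ measurable B /\ A = (fun w => x i w 0 j) @^-1` B].

Definition past_sigma {R : realType} {d : nat} {T : Type}
  (x : nat -> T -> 'rV[R]_d) (k : nat) : set_system T :=
  <<s gen_sets x k >>.

Definition sub_measurable {R : realType} {T : Type} (Fk : set_system T)
  (Z : T -> R) : Prop :=
  forall B : set R, measurable B -> Fk (Z @^-1` B).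

Definition is_cond_exp {R : realType} {dd : measure_display}
  {T : measurableType dd} (P : probability T R) (Fk : set_system T)
  (Y Z : T -> R) : Prop :=
  sub_measurable Fk Z /\
  forall A, Fk A ->
    (\int[P]_(w in A) (Z w)%:E = \int[P]_(w in A) (Y w)%:E)%E.

From HB Require Import structures.
From mathcomp Require Import all_boot all_order all_algebra.
From mathcomp Require Import all_classical all_reals all_analysis.
From mathcomp Require Import ring lra.
From mathcomp Require Import measurable_realfun.
Import Order.TTheory GRing.Theory Num.Theory.
Local Open Scope classical_set_scope.
Local Open Scope ring_scope.

(* Write D_k = x_k - x*, r_k = x_k - J x_k and e_k = J~_k - J x_k, so that
   D_{k+1} = D_k - a_k (r_k - e_k).  The weak Minty inequality at x*, applied to
   the resolvent value J x_k, gives alpha |r_k|^2 <= <r_k, D_k>; expanding the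
   square and using Young's inequality yields the pointwise bound
     |D_{k+1}|^2 / 2 + (alpha / 4) a_k |r_k|^2
       <= |D_k|^2 / 2 + (3 / 2) a_k^2 |e_k|^2 + a_k <e_k, D_k>.
   In expectation, E |e_k|^2 <= E eps_{k,v}^2 by the tower property, and since D_k
   is sigma(x_0, ..., x_k)-measurable, E <e_k, D_k> = E <E_k J~_k - J x_k, D_k>
   <= E [|D_k| eps_{k,b}]; this "taking out what is known" step is proved by
   approximating D_k from below by functions that are constant on sets of
   sigma(x_0, ..., x_k).  The expected bounds telescope; if one of the error
   expectations is infinite, the right-hand side is +oo. *)

(** * Inner product on row vectors *)

Section EuclideanGeometry.
Context {R : realType} {d : nat}.
Implicit Types (u v w : 'rV[R]_d) (a : R).

Lemma dotvC u v : dotv u v = dotv v u.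
Proof. by apply: eq_bigr => i _; rewrite mulrC. Qed.

Lemma dotvDl u v w : dotv (u + v) w = dotv u w + dotv v w.
Proof. by rewrite /dotv -big_split; apply: eq_bigr => i _; rewrite mxE mulrDl. Qed.

Lemma dotvNl u w : dotv (- u) w = - dotv u w.
Proof. by rewrite /dotv -sumrN; apply: eq_bigr => i _; rewrite mxE mulNr. Qed.

Lemma dotvZl a u w : dotv (a *: u) w = a * dotv u w.
Proof. by rewrite /dotv mulr_sumr; apply: eq_bigr => i _; rewrite mxE mulrA. Qed.

Lemma dotvBl u v w : dotv (u - v) w = dotv u w - dotv v w.
Proof. by rewrite dotvDl dotvNl. Qed.

Lemma dotvDr u v w : dotv w (u + v) = dotv w u + dotv w v.
Proof. by rewrite dotvC dotvDl !(dotvC w). Qed.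

Lemma dotvNr u w : dotv w (- u) = - dotv w u.
Proof. by rewrite dotvC dotvNl dotvC. Qed.

Lemma dotvZr a u w : dotv w (a *: u) = a * dotv w u.
Proof. by rewrite dotvC dotvZl dotvC. Qed.

Lemma dotvBr u v w : dotv w (u - v) = dotv w u - dotv w v.
Proof. by rewrite dotvDr dotvNr. Qed.

Definition dotvE := (dotvDl, dotvDr, dotvBl, dotvBr, dotvNl, dotvNr, dotvZl, dotvZr).

Lemma dotv_ge0 u : 0 <= dotv u u.
Proof. by apply: sumr_ge0 => i _; rewrite -expr2 sqr_ge0. Qed.

Lemma normv_ge0 u : 0 <= normv u.
Proof. exact: sqrtr_ge0. Qed.

Lemma normv_sqr u : normv u ^+ 2 = dotv u u.
Proof. by rewrite /normv sqr_sqrtr // dotv_ge0. Qed.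

Lemma sqr_coord_le_dotv u j : u 0 j ^+ 2 <= dotv u u.
Proof.
rewrite /dotv (bigD1 j) //= expr2 lerDl.
by apply: sumr_ge0 => i _; rewrite -expr2 sqr_ge0.
Qed.

Lemma norm_coord_le_normv u j : `|u 0 j| <= normv u.
Proof.
by rewrite -(sqrtr_sqr (u 0 j)) ler_sqrt ?dotv_ge0 ?sqr_coord_le_dotv.
Qed.

(* The quadratic t |-> |t u - v|^2 is nonnegative, so its discriminant is not positive. *)
Lemma dotv_sqr_le u v : dotv u v ^+ 2 <= dotv u u * dotv v v.
Proof.
have quad_ge0 t : 0 <= t ^+ 2 * dotv u u - 2 * t * dotv u v + dotv v v.
  have := dotv_ge0 (t *: u - v); rewrite !dotvE (dotvC v u).
  by congr (0 <= _); ring.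
have uu_ge0 := dotv_ge0 u; have vv_ge0 := dotv_ge0 v.
move: quad_ge0 uu_ge0 vv_ge0.
set A := dotv u u; set B := dotv v v; set C := dotv u v => quad_ge0 A_ge0 B_ge0.
have [A0|A_neq0] := eqVneq A 0.
  have [C0|C_neq0] := eqVneq C 0; first by rewrite A0 C0 expr0n mul0r.
  have := quad_ge0 ((B + 1) / (2 * C)).
  have -> : 2 * ((B + 1) / (2 * C)) * C = B + 1 by field; rewrite C_neq0.
  by rewrite A0; lra.
have A_gt0 : 0 < A by rewrite lt_neqAle eq_sym A_neq0.
have := quad_ge0 (C / A).
have -> : (C / A) ^+ 2 * A = C ^+ 2 / A by field.
have -> : 2 * (C / A) * C = 2 * (C ^+ 2 / A) by field.
by rewrite -ler_pdivrMl // mulrC; lra.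
Qed.

Lemma dotv_le_normv u v : dotv u v <= normv u * normv v.
Proof.
rewrite -sqrtrM ?dotv_ge0 // (le_trans (ler_norm _)) //.
by rewrite -(sqrtr_sqr (dotv u v)) ler_sqrt ?dotv_sqr_le // mulr_ge0 ?dotv_ge0.
Qed.

Lemma norm_dotv_le u v : `|dotv u v| <= 2^-1 * (dotv u u + dotv v v).
Proof.
have := dotv_ge0 (u - v); have := dotv_ge0 (u + v).
rewrite !dotvE (dotvC v u) ler_norml; lra.
Qed.

End EuclideanGeometry.

(** * One step of the relaxed resolvent iteration *)

Definition weak_minty_solution {R : realType} {d : nat} (rho : R) (A : setop R d)
    (xstar : 'rV[R]_d) : Prop :=
  forall z u, A z u -> - rho * dotv u u <= dotv u (z - xstar).

Section ResolventStep.
Context {R : realType} {d : nat}.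
Implicit Types (D r e : 'rV[R]_d) (a al : R).

Lemma resolvent_residual_le (A : setop R d) (eta rho : R) (xstar z y : 'rV[R]_d) :
  0 < eta -> weak_minty_solution rho A xstar -> resolvent_at eta A z y ->
  (1 - rho / eta) * dotv (z - y) (z - y) <= dotv (z - y) (z - xstar).
Proof.
move=> eta_gt0 minty [u [Ayu ->]].
have -> : y + eta *: u - y = eta *: u by rewrite addrAC subrr add0r.
have -> : y + eta *: u - xstar = eta *: u + (y - xstar) by rewrite addrAC addrC.
have minty_yu := minty _ _ Ayu; have U_ge0 := dotv_ge0 u.
rewrite !dotvZl dotvDr !dotvZr; move: minty_yu U_ge0.
set U := dotv u u; set V := dotv u (y - xstar) => minty_yu U_ge0.
have -> : (1 - rho / eta) * (eta * (eta * U)) = eta * (eta * U) - rho * eta * U.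
  by field; rewrite gt_eqF.
have : 0 <= eta * (V + rho * U) by apply: mulr_ge0; [exact: ltW | lra].
lra.
Qed.

(* Here D, r and e play the roles of x_k - x*, x_k - J x_k and J~_k - J x_k.  Besides
   [al |r|^2 <= <r, D>], the proof uses |r - e|^2 <= 3/2 |r|^2 + 3 |e|^2. *)
Lemma relaxed_step_le D r e a al : 0 <= a -> a <= al ->
  al * dotv r r <= dotv r D ->
  2^-1 * dotv (D - a *: (r - e)) (D - a *: (r - e)) + al / 4 * a * dotv r r
  <= 2^-1 * dotv D D + 3 / 2 * a ^+ 2 * dotv e e + a * dotv e D.
Proof.
move=> a_ge0 a_le residual_le.
move: residual_le (dotv_ge0 (r + 2 *: e)).
rewrite !dotvE (dotvC e r) (dotvC D r) (dotvC D e).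
have := dotv_ge0 r; set RR := dotv r r; set RE := dotv r e; set EE := dotv e e.
set RD := dotv r D; set ED := dotv e D; set DD := dotv D D => RR_ge0 residual_le young.
have : a * (al * RR) <= a * RD by rewrite ler_wpM2l.
have : 0 <= a ^+ 2 * (RR + 2 * RE + (2 * RE + 2 * (2 * EE))) by rewrite mulr_ge0 ?sqr_ge0.
have : 0 <= a * RR * (al - a) by rewrite !mulr_ge0 ?subr_ge0.
nra.
Qed.

Lemma relaxed_step_sqr_le D r e a al : 0 <= a -> a <= al ->
  al * dotv r r <= dotv r D ->
  dotv (D - a *: (r - e)) (D - a *: (r - e))
  <= (1 + a) * dotv D D + (3 * a ^+ 2 + a) * dotv e e.
Proof.
move=> a_ge0 a_le residual_le.
have := relaxed_step_le D r e a al a_ge0 a_le residual_le.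
have /ler_normlP[_ dotv_eD] := norm_dotv_le e D.
have : 0 <= al / 4 * a * dotv r r.
  by rewrite !mulr_ge0 ?dotv_ge0 ?invr_ge0 // (le_trans a_ge0).
have : a * dotv e D <= a * (2^-1 * (dotv e e + dotv D D)) by rewrite ler_wpM2l.
nra.
Qed.

End ResolventStep.

Lemma ln_ge1Bv {R : realType} (y : R) : 0 < y -> 1 - y^-1 <= ln y.
Proof.
move=> y_gt0; have := expR_ge1Dx (- ln y).
by rewrite expRN lnK ?posrE //; lra.
Qed.

Lemma sqrt_mul_ln_ge1 {R : realType} (k : nat) :
  1 <= Num.sqrt (k%:R + 2 : R) * ln (k%:R + 3).
Proof.
have k_ge0 : (0 : R) <= k%:R by [].
have ln3 : 5 / 6 <= ln (3 : R).
  have -> : (3 : R) = 3 / 2 * 2 by field.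
  rewrite lnM ?posrE //.
  have := @ln_ge1Bv R (3 / 2) ltac:(lra); have := @ln_ge1Bv R 2 ltac:(lra).
  lra.
have sqrt2 : 6 / 5 <= Num.sqrt (2 : R).
  rewrite -(@ger0_norm _ (6 / 5)); last lra.
  by rewrite -sqrtr_sqr ler_sqrt; lra.
have : Num.sqrt (2 : R) <= Num.sqrt (k%:R + 2) by rewrite ler_sqrt; lra.
have : ln (3 : R) <= ln (k%:R + 3) by rewrite ler_ln ?posrE; lra.
set s := Num.sqrt (k%:R + 2); set l := ln (k%:R + 3) => l_ge s_ge.
have : 0 <= (s - 6 / 5) * (l - 5 / 6) by apply: mulr_ge0; lra.
nra.
Qed.

(** * Integrals of real-valued functions *)

Lemma sub_measurable_fun {d} {T : measurableType d} {R : realType}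
    {Fk : set_system T} {Z : T -> R} :
  Fk `<=` measurable -> sub_measurable Fk Z -> measurable_fun setT Z.
Proof. by move=> FkS FZ _ B mB; rewrite setTI; exact/FkS/FZ. Qed.

Lemma sub_measurable_comp {T : Type} {R : realType} {Fk : set_system T}
    {f : T -> R} {g : R -> R} :
  sub_measurable Fk f -> measurable_fun setT g -> sub_measurable Fk (g \o f).
Proof.
move=> Ff mg B mB; rewrite comp_preimage; apply: Ff.
by rewrite -[_ @^-1` _]setTI; exact: mg.
Qed.

Section RealIntegral.
Context {d} {T : measurableType d} {R : realType} (mu : {measure set T -> \bar R}).
Implicit Types (f g : T -> R) (a : R).

Lemma integrableZl_real a {f} : mu.-integrable setT (EFin \o f) ->
  mu.-integrable setT (EFin \o (fun w => a * f w)).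
Proof. by move=> f_int; apply: eq_integrable (integrableZl measurableT a f_int). Qed.

Lemma integrableD_real {f g} :
  mu.-integrable setT (EFin \o f) -> mu.-integrable setT (EFin \o g) ->
  mu.-integrable setT (EFin \o (fun w => f w + g w)).
Proof.
move=> f_int g_int.
by apply: eq_integrable (integrableD measurableT f_int g_int) => // w _ /=; rewrite EFinD.
Qed.

Lemma integralZl_real a {f} : mu.-integrable setT (EFin \o f) ->
  (\int[mu]_w (a * f w)%:E = a%:E * \int[mu]_w (f w)%:E)%E.
Proof. by move=> f_int; rewrite -integralZl. Qed.

Lemma integralD_real {f g} :
  mu.-integrable setT (EFin \o f) -> mu.-integrable setT (EFin \o g) ->
  (\int[mu]_w (f w + g w)%:E = \int[mu]_w (f w)%:E + \int[mu]_w (g w)%:E)%E.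
Proof. by move=> f_int g_int; rewrite -integralD_EFin. Qed.

Lemma ge0_integral_comb2 a b f g : 0 <= a -> 0 <= b ->
  measurable_fun setT f -> measurable_fun setT g ->
  (forall w, 0 <= f w) -> (forall w, 0 <= g w) ->
  (\int[mu]_w (a * f w + b * g w)%:E =
   a%:E * \int[mu]_w (f w)%:E + b%:E * \int[mu]_w (g w)%:E)%E.
Proof.
move=> a_ge0 b_ge0 mf mg f_ge0 g_ge0.
have mfE : measurable_fun [set: T] (EFin \o f) by exact/measurable_EFinP.
have mgE : measurable_fun [set: T] (EFin \o g) by exact/measurable_EFinP.
rewrite -!ge0_integralZl ?lee_fin // -?ge0_integralD //.
all: by [exact: emeasurable_funM | move=> w _; rewrite -?EFinM lee_fin ?mulr_ge0].
Qed.

Lemma integrable_ae_le {f g} : measurable_fun setT f ->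
  mu.-integrable setT (EFin \o g) -> {ae mu, forall w, `|f w| <= g w} ->
  mu.-integrable setT (EFin \o f).
Proof.
move=> mf /integrableP[mg g_fin] f_le; apply/integrableP.
have mfE : measurable_fun [set: T] (EFin \o f) by exact/measurable_EFinP.
split=> //; apply: le_lt_trans g_fin; apply: ae_ge0_le_integral => //.
- exact: measurableT_comp.
- exact: measurableT_comp.
- by apply: filterS f_le => w f_le _ /=; rewrite lee_fin (le_trans f_le) ?ler_norm.
Qed.

Lemma integrable_ae_ge0 {f} : measurable_fun setT f -> {ae mu, forall w, 0 <= f w} ->
  (\int[mu]_w (f w)%:E < +oo)%E -> mu.-integrable setT (EFin \o f).
Proof.
move=> mf f_ge0 f_fin; apply/integrableP.
have mfE : measurable_fun [set: T] (EFin \o f) by exact/measurable_EFinP.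
split=> //; rewrite (ae_eq_integral (EFin \o f)) //.
- exact: measurableT_comp.
- by apply: filterS f_ge0 => w f_ge0 _ /=; rewrite ger0_norm.
Qed.

Lemma integral_ae_ge0 {f} : measurable_fun setT f -> {ae mu, forall w, 0 <= f w} ->
  (0 <= \int[mu]_w (f w)%:E)%E.
Proof.
move=> mf f_ge0.
have mfE : measurable_fun [set: T] (EFin \o f) by exact/measurable_EFinP.
rewrite (ae_eq_integral (fun w => `|(f w)%:E|)%E) //.
- by apply: integral_ge0 => w _; exact: abse_ge0.
- exact: measurableT_comp.
- by apply: filterS f_ge0 => w f_ge0 _ /=; rewrite ger0_norm.
Qed.

(* No integrability of f is needed: only its positive part is compared with g. *)
Lemma ae_le_integral {f g} : measurable_fun setT f -> measurable_fun setT g ->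
  {ae mu, forall w, f w <= g w} -> {ae mu, forall w, 0 <= g w} ->
  (\int[mu]_w (f w)%:E <= \int[mu]_w (g w)%:E)%E.
Proof.
move=> mf mg f_le g_ge0.
have mfE : measurable_fun [set: T] (EFin \o f) by exact/measurable_EFinP.
have mgE : measurable_fun [set: T] (EFin \o g) by exact/measurable_EFinP.
rewrite integralE (@le_trans _ _ (\int[mu]_w ((EFin \o f)^\+ w))%E) //.
  rewrite -[leRHS]sube0 leeB // integral_ge0 // => w _; exact: funeneg_ge0.
rewrite (ae_eq_integral (fun w => `|(g w)%:E|)%E (EFin \o g)) //; first last.
- by apply: filterS g_ge0 => w g_ge0 _ /=; rewrite ger0_norm.
- exact: measurableT_comp.
apply: ae_ge0_le_integral => //.
- exact: measurable_funepos.
- exact: measurableT_comp.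
apply: filterS2 f_le g_ge0 => w f_le g_ge0 _ /=.
by rewrite funeposE /= ger0_norm // ge_max !lee_fin f_le g_ge0.
Qed.

End RealIntegral.

(** * Conditional expectations *)

Section CondExpIntegrable.
Context {d} {T : measurableType d} {R : realType} (mu : {measure set T -> \bar R}).
Implicit Types (A : set T) (Y Z : T -> R).

Lemma integral_abse_le_of_ge0 A Y Z : measurable A ->
  mu.-integrable setT (EFin \o Y) -> (forall w, A w -> 0 <= Z w) ->
  (\int[mu]_(w in A) (Z w)%:E = \int[mu]_(w in A) (Y w)%:E)%E ->
  (\int[mu]_(w in A) `|(Z w)%:E| <= \int[mu]_w `|(Y w)%:E|)%E.
Proof.
move=> mA Y_int Z_ge0 ZY.
have mY := measurable_int _ Y_int.
rewrite (eq_integral (fun w => (Z w)%:E)); last first.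
  by move=> w /[1!inE] Aw; rewrite gee0_abs ?lee_fin ?Z_ge0.
rewrite ZY (le_trans (lee_abs _)) // (le_trans (le_abse_integral _ _ _)) //.
  exact: measurable_funS mY.
by apply: ge0_subset_integral => //; exact: measurableT_comp.
Qed.

Lemma integral_abse_le_of_le0 A Y Z : measurable A -> measurable_fun setT Z ->
  mu.-integrable setT (EFin \o Y) -> (forall w, A w -> Z w <= 0) ->
  (\int[mu]_(w in A) (Z w)%:E = \int[mu]_(w in A) (Y w)%:E)%E ->
  (\int[mu]_(w in A) `|(Z w)%:E| <= \int[mu]_w `|(Y w)%:E|)%E.
Proof.
move=> mA mZ Y_int Z_le0 ZY.
have mY := measurable_int _ Y_int.
have absZE : (\int[mu]_(w in A) `|(Z w)%:E| = - \int[mu]_(w in A) (Z w)%:E)%E.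
  rewrite [in RHS](eq_integral (fun w => - `|(Z w)%:E|)%E); last first.
    by move=> w /[1!inE] Aw; rewrite lee0_abs ?lee_fin ?Z_le0 // oppeK.
  by rewrite integral_ge0N ?oppeK // => w _; exact: abse_ge0.
rewrite absZE ZY (le_trans (lee_abs _)) // abseN (le_trans (le_abse_integral _ _ _)) //.
  exact: measurable_funS mY.
by apply: ge0_subset_integral => //; exact: measurableT_comp.
Qed.

(* On the F_k-sets {Z >= 0} and {Z < 0}, the integral of |Z| is that of Y or -Y. *)
Lemma cond_exp_integrable {Fk : set_system T} {Y Z} : Fk `<=` measurable ->
  mu.-integrable setT (EFin \o Y) -> sub_measurable Fk Z ->
  (forall A, Fk A -> \int[mu]_(w in A) (Z w)%:E = \int[mu]_(w in A) (Y w)%:E)%E ->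
  mu.-integrable setT (EFin \o Z).
Proof.
move=> FkS Y_int FZ ZY.
have mZ := sub_measurable_fun FkS FZ.
have mZE : measurable_fun [set: T] (EFin \o Z) by exact/measurable_EFinP.
pose Zpos := Z @^-1` `[0, +oo[; pose Zneg := Z @^-1` `]-oo, 0[.
have FZpos : Fk Zpos by exact: FZ (measurable_itv _).
have FZneg : Fk Zneg by exact: FZ (measurable_itv _).
have setT_split : [set: T] = Zpos `|` Zneg.
  apply/seteqP; split=> w // _; rewrite /Zpos /Zneg /= !in_itv /= andbT.
  by case: (leP 0 (Z w)); [left | right].
have disj : [disjoint Zpos & Zneg].
  apply/disj_setPS => w [].
  by rewrite /Zpos /Zneg /= !in_itv /= andbT => /le_lt_trans h /h; rewrite ltxx.
apply/integrableP; split=> //.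
have [mZpos mZneg] := (FkS _ FZpos, FkS _ FZneg).
rewrite setT_split integral_setU // -?setT_split; last exact: measurableT_comp.
have [_ Y_fin] := integrableP _ _ _ Y_int.
apply: lte_add_pinfty; apply: le_lt_trans Y_fin.
- apply: integral_abse_le_of_ge0 => //.
    by move=> w; rewrite /Zpos /= in_itv /= andbT.
  exact: ZY.
- apply: integral_abse_le_of_le0 => //.
    by move=> w; rewrite /Zneg /= in_itv /= => /ltW.
  exact: ZY.
Qed.

End CondExpIntegrable.

Lemma eq0_of_norm_le_scale {R : realFieldType} (c m : R) :
  (forall delta, 0 < delta -> `|c| <= delta * m) -> c = 0.
Proof.
move=> c_le; apply/eqP; rewrite -normr_le0; apply/ler_addgt0Pr => e e_gt0.
have m1_gt0 : 0 < `|m| + 1 by rewrite ltr_pwDr.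
rewrite add0r (le_trans (c_le _ (divr_gt0 e_gt0 m1_gt0))) // mulrAC.
rewrite ler_pdivrMr // ler_wpM2l ?ltW //.
by have := ler_norm m; lra.
Qed.

Section GridFloor.
Context {R : realType}.
Variable delta : R.
Hypothesis delta_gt0 : 0 < delta.

Definition grid_floor (x : R) : R := delta * (Num.truncn (x / delta))%:R.

Lemma grid_floor_ge0 x : 0 <= grid_floor x.
Proof. by rewrite /grid_floor mulr_ge0 // ltW. Qed.

Lemma grid_floor_le x : 0 <= x -> grid_floor x <= x.
Proof.
by move=> x_ge0; rewrite /grid_floor mulrC -ler_pdivlMr // truncn_le divr_ge0 // ltW.
Qed.

Lemma grid_floor_gtB x : x - delta < grid_floor x.
Proof.
have := truncnS_gt (x / delta).
by rewrite -natr1 ltr_pdivrMr // mulrDl mul1r /grid_floor; lra.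
Qed.

Lemma grid_level_set x n : 0 <= x ->
  (Num.truncn (x / delta) = n) = (n%:R * delta <= x < n.+1%:R * delta).
Proof.
move=> x_ge0; apply/propext; split=> [<- | /andP[lex ltx]].
  by rewrite -!ler_pdivlMr -?ltr_pdivrMr // truncn_le divr_ge0 ?truncnS_gt // ltW.
by apply: truncn_def; rewrite ler_pdivlMr // ltr_pdivrMr // lex ltx.
Qed.

End GridFloor.

Section PullOut.
Context {d} {T : measurableType d} {R : realType} (mu : {measure set T -> \bar R}).
Context {Fk : set_system T} {W : T -> R}.
Hypotheses (FkS : Fk `<=` measurable) (W_int : mu.-integrable setT (EFin \o W))
  (W_orth : forall A, Fk A -> (\int[mu]_(w in A) (W w)%:E = 0)%E).

Let mW : measurable_fun setT W.
Proof. exact/measurable_EFinP/(measurable_int _ W_int). Qed.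

Section Grid.
Variables (D : T -> R) (delta : R).
Hypotheses (delta_gt0 : 0 < delta) (FD : sub_measurable Fk D) (D_ge0 : forall w, 0 <= D w).

Let level n := [set w | Num.truncn (D w / delta) = n].

Let Flevel n : Fk (level n).
Proof.
have -> : level n = D @^-1` `[n%:R * delta, n.+1%:R * delta[.
  by apply/seteqP; split=> w; rewrite /level /= in_itv /= grid_level_set.
exact: FD (measurable_itv _).
Qed.

Let measurable_grid : measurable_fun setT (grid_floor delta \o D).
Proof.
move=> _ B mB; rewrite setTI.
have -> : (grid_floor delta \o D) @^-1` B = \bigcup_(n in [set n | B (delta * n%:R)]) level n.
  apply/seteqP; split=> w /=; first by exists (Num.truncn (D w / delta)).
  by move=> [n Bn level_n]; rewrite /= /grid_floor level_n.
by apply: bigcup_measurable => n _; exact/FkS/Flevel.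
Qed.

Hypothesis WD_int : mu.-integrable setT (EFin \o (fun w => W w * D w)).

Let Wgrid_int :
  mu.-integrable setT (EFin \o (fun w => W w * grid_floor delta (D w))).
Proof.
apply: le_integrable WD_int => //; first exact/measurable_EFinP/measurable_funM.
move=> w _; rewrite /= lee_fin (normrM (W w)) (normrM (W w)) ler_wpM2l //.
by rewrite !ger0_norm ?grid_floor_le ?grid_floor_ge0.
Qed.

(* On the F_k-set [level n] the grid function is the constant delta * n. *)
Lemma orth_integral_mul_grid :
  (\int[mu]_w (W w * grid_floor delta (D w))%:E = 0)%E.
Proof.
have levels : [set: T] = \bigcup_n level n.
  by apply/seteqP; split=> w // _; exists (Num.truncn (D w / delta)).
rewrite levels integral_bigcup -?levels //; last 2 first.
- by move=> i j _ _ [w [<- <-]].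
- by move=> n; exact/FkS/Flevel.
apply: eseries0 => n _ _.
rewrite (eq_integral (fun w => (delta * n%:R)%:E * (W w)%:E)%E); last first.
  by move=> w /[1!inE] <-; rewrite -EFinM mulrC.
rewrite integralZl ?W_orth ?mule0 //; first exact/FkS/Flevel.
by apply: integrableS W_int => //; exact/FkS/Flevel.
Qed.

Lemma orth_integral_mul_le_grid :
  (`|\int[mu]_w (W w * D w)%:E| <= delta%:E * \int[mu]_w `|(W w)%:E|)%E.
Proof.
have mD := sub_measurable_fun FkS FD.
have mWB : measurable_fun setT (fun w => W w * D w - W w * grid_floor delta (D w)).
  by apply: measurable_funB; exact: measurable_funM.
have -> : (\int[mu]_w (W w * D w)%:E = \int[mu]_w (W w * D w)%:E
    - \int[mu]_w (W w * grid_floor delta (D w))%:E)%E.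
  by rewrite orth_integral_mul_grid sube0.
rewrite -integralB_EFin // (le_trans (le_abse_integral _ _ _)) //.
  exact/measurable_EFinP.
have mabsW : measurable_fun setT (fun w => `|(W w)%:E|)%E.
  exact: measurableT_comp (measurable_int _ W_int).
rewrite -ge0_integralZl ?lee_fin ?(ltW delta_gt0) //.
apply: ge0_le_integral => //.
- exact/measurableT_comp/measurable_EFinP.
- exact: emeasurable_funM.
move=> w _; rewrite /= -mulrBr normrM lee_fin mulrC ler_wpM2r //.
rewrite ger0_norm ?subr_ge0 ?grid_floor_le //.
by have := grid_floor_gtB _ delta_gt0 (D w); lra.
Qed.

End Grid.

Lemma orth_integral_mul_ge0 D : sub_measurable Fk D -> (forall w, 0 <= D w) ->
  mu.-integrable setT (EFin \o (fun w => W w * D w)) ->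
  (\int[mu]_w (W w * D w)%:E = 0)%E.
Proof.
move=> FD D_ge0 WD_int.
have WD_fin := integrable_fin_num measurableT WD_int.
have absW_fin := integrable_fin_num measurableT (integrable_abse W_int).
rewrite -(fineK WD_fin); congr EFin.
apply: (@eq0_of_norm_le_scale _ _ (fine (\int[mu]_w `|(W w)%:E|)%E)) => delta delta_gt0.
rewrite -lee_fin EFinM fineK // -abse_EFin fineK //.
exact: orth_integral_mul_le_grid.
Qed.

Lemma orth_integral_mul D : sub_measurable Fk D ->
  mu.-integrable setT (EFin \o (fun w => W w * D w)) ->
  (\int[mu]_w (W w * D w)%:E = 0)%E.
Proof.
move=> FD WD_int.
have part_int (E : T -> R) : sub_measurable Fk E -> (forall w, `|E w| <= `|D w|) ->
    mu.-integrable setT (EFin \o (fun w => W w * E w)).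
  move=> FE E_le; apply: le_integrable WD_int => //.
    exact/measurable_EFinP/measurable_funM/(sub_measurable_fun FkS FE).
  by move=> w _; rewrite /= lee_fin !normrM ler_wpM2l.
have FDpos : sub_measurable Fk D^\+.
  exact: (sub_measurable_comp FD (measurable_funrpos (@measurable_id _ R setT))).
have FDneg : sub_measurable Fk D^\-.
  exact: (sub_measurable_comp FD (measurable_funrneg (@measurable_id _ R setT))).
have normD w : D^\+ w + D^\- w = `|D w| by rewrite -[RHS]/((Num.norm \o D) w) -funrposDneg.
have Dpos_int : mu.-integrable setT (EFin \o (fun w => W w * D^\+ w)).
  apply: part_int => // w; rewrite -normD ger0_norm ?funrpos_ge0 // lerDl.
  exact: funrneg_ge0.
have Dneg_int : mu.-integrable setT (EFin \o (fun w => W w * D^\- w)).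
  apply: part_int => // w; rewrite -normD ger0_norm ?funrneg_ge0 // lerDr.
  exact: funrpos_ge0.
rewrite (eq_integral (fun w => (W w * D^\+ w)%:E - (W w * D^\- w)%:E)%E); last first.
  by move=> w _; rewrite -EFinB -mulrBr -[in LHS](funrposBneg D).
by rewrite integralB_EFin // !orth_integral_mul_ge0 ?subee.
Qed.

End PullOut.

Section CondExpProperties.
Context {d} {T : measurableType d} {R : realType} (P : probability T R).
Context {Fk : set_system T}.
Hypothesis FkS : Fk `<=` measurable.
Implicit Types (Y Z V D : T -> R).

Lemma cond_exp_pull_out {Y Z D} : P.-integrable setT (EFin \o Y) ->
  is_cond_exp P Fk Y Z -> sub_measurable Fk D ->
  P.-integrable setT (EFin \o (fun w => (Y w - Z w) * D w)) ->
  (\int[P]_w ((Y w - Z w) * D w)%:E = 0)%E.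
Proof.
move=> Y_int [FZ ZY] FD YZD_int.
have Z_int := cond_exp_integrable P FkS Y_int FZ ZY.
apply: (orth_integral_mul P FkS _ _ _ FD YZD_int).
  exact: eq_integrable (integrableB measurableT Y_int Z_int).
move=> A FA; have mA := FkS _ FA.
have YA_int := integrableS measurableT mA (subsetT A) Y_int.
have ZA_int := integrableS measurableT mA (subsetT A) Z_int.
rewrite (eq_integral (fun w => (Y w)%:E - (Z w)%:E)%E) // integralB_EFin //.
by rewrite ZY // subee // integrable_fin_num.
Qed.

Lemma cond_exp_integral_le {Y Z V} : Fk setT -> is_cond_exp P Fk Y Z ->
  measurable_fun setT V -> (forall w, 0 <= V w) -> {ae P, forall w, Z w <= V w} ->
  (\int[P]_w (Y w)%:E <= \int[P]_w (V w)%:E)%E.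
Proof.
move=> FT [FZ ZY] mV V_ge0 Z_le.
rewrite -ZY // ae_le_integral //; first exact: sub_measurable_fun FkS FZ.
exact: aeW.
Qed.

End CondExpProperties.

Definition measurable_rV {d} {T : measurableType d} {R : realType} {n : nat}
    (u : T -> 'rV[R]_n) : Prop :=
  forall j, measurable_fun setT (fun w => u w 0 j).

Section RandomVectors.
Context {d} {T : measurableType d} {R : realType} {n : nat}.
Implicit Types (u v : T -> 'rV[R]_n).

Lemma measurable_rVB {u v} : measurable_rV u -> measurable_rV v ->
  measurable_rV (fun w => u w - v w).
Proof.
move=> mu mv j; rewrite (_ : (fun w => _) = (fun w => u w 0 j - v w 0 j)).
  exact: measurable_funB.
by apply/funext => w; rewrite !mxE.
Qed.

Lemma measurable_dotv {u v} : measurable_rV u -> measurable_rV v ->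
  measurable_fun setT (fun w => dotv (u w) (v w)).
Proof. by move=> mu mv; apply: measurable_sum => j; exact: measurable_funM. Qed.

Lemma measurable_normv {u} : measurable_rV u -> measurable_fun setT (fun w => normv (u w)).
Proof.
move=> mu; rewrite /normv.
apply: (measurableT_comp (continuous_measurable_fun (@sqrt_continuous R))).
exact: measurable_dotv.
Qed.

Variable mu : {measure set T -> \bar R}.

Lemma integrable_coord_mul {u v} j : measurable_rV u -> measurable_rV v ->
  mu.-integrable setT (EFin \o (fun w => dotv (u w) (u w))) ->
  mu.-integrable setT (EFin \o (fun w => dotv (v w) (v w))) ->
  mu.-integrable setT (EFin \o (fun w => u w 0 j * v w 0 j)).
Proof.
move=> mu_ mv uu_int vv_int.
apply: (integrable_ae_le mu _ (integrableZl_real mu 2^-1 (integrableD_real mu uu_int vv_int))).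
  exact: measurable_funM.
apply: aeW => w; rewrite normrM.
have := sqr_ge0 (`|u w 0 j| - `|v w 0 j|).
have := real_normK (num_real (u w 0 j)); have := real_normK (num_real (v w 0 j)).
have := sqr_coord_le_dotv (u w) j; have := sqr_coord_le_dotv (v w) j.
nra.
Qed.

Lemma integrable_dotv {u v} : measurable_rV u -> measurable_rV v ->
  mu.-integrable setT (EFin \o (fun w => dotv (u w) (u w))) ->
  mu.-integrable setT (EFin \o (fun w => dotv (v w) (v w))) ->
  mu.-integrable setT (EFin \o (fun w => dotv (u w) (v w))).
Proof.
move=> mu_ mv uu_int vv_int.
apply: (integrable_ae_le mu _ (integrableZl_real mu 2^-1 (integrableD_real mu uu_int vv_int))).
  exact: measurable_dotv.
by apply: aeW => w; exact: norm_dotv_le.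
Qed.

Lemma integral_dotv u v :
  (forall j, mu.-integrable setT (EFin \o (fun w => u w 0 j * v w 0 j))) ->
  (\int[mu]_w (dotv (u w) (v w))%:E = \sum_(j < n) \int[mu]_w (u w 0 j * v w 0 j)%:E)%E.
Proof.
move=> uv_int; rewrite -integral_sum //.
by apply: eq_integral => w _; rewrite sumEFin.
Qed.

End RandomVectors.

Lemma cond_exp_dotv_le {d} {T : measurableType d} {R : realType} {n : nat}
    (P : probability T R) {Fk : set_system T} {Y Jx Zb D : T -> 'rV[R]_n} {eb : T -> R} :
  Fk `<=` measurable ->
  (forall j, P.-integrable setT (EFin \o (fun w => Y w 0 j))) -> measurable_rV Jx ->
  (forall j, is_cond_exp P Fk (fun w => Y w 0 j) (fun w => Zb w 0 j)) ->
  (forall j, sub_measurable Fk (fun w => D w 0 j)) ->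
  measurable_fun setT eb -> {ae P, forall w, normv (Zb w - Jx w) <= eb w} ->
  P.-integrable setT (EFin \o (fun w => dotv (Y w - Jx w) (Y w - Jx w))) ->
  P.-integrable setT (EFin \o (fun w => dotv (D w) (D w))) ->
  (\int[P]_w (normv (D w) * eb w)%:E < +oo)%E ->
  (\int[P]_w (dotv (Y w - Jx w) (D w))%:E <= \int[P]_w (normv (D w) * eb w)%:E)%E.
Proof.
move=> FkS Y_int mJx Zb_ce FD meb Zb_le YJ_int DD_int Deb_fin.
have mY : measurable_rV Y by move=> j; exact/measurable_EFinP/(measurable_int _ (Y_int j)).
have mZb : measurable_rV Zb by move=> j; exact: sub_measurable_fun FkS (Zb_ce j).1.
have mD : measurable_rV D by move=> j; exact: sub_measurable_fun FkS (FD j).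
have [mYJ mZJ] := (measurable_rVB mY mJx, measurable_rVB mZb mJx).
have Deb_int : P.-integrable setT (EFin \o (fun w => normv (D w) * eb w)).
  apply: integrable_ae_ge0 Deb_fin; first exact/measurable_funM/meb/measurable_normv.
  by apply: filterS Zb_le => w /(le_trans (normv_ge0 _)); exact: mulr_ge0 (normv_ge0 _).
have YJD_int j := integrable_coord_mul P j mYJ mD YJ_int DD_int.
have ZJD_int j : P.-integrable setT (EFin \o (fun w => (Zb w - Jx w) 0 j * D w 0 j)).
  apply: (integrable_ae_le P _ Deb_int); first exact: measurable_funM.
  apply: filterS Zb_le => w Zb_le; rewrite normrM mulrC.
  apply: ler_pM; rewrite ?normr_ge0 ?norm_coord_le_normv //.
  exact: le_trans (norm_coord_le_normv _ _) Zb_le.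
rewrite integral_dotv //.
under eq_bigr => j _.
  have -> : (\int[P]_w ((Y w - Jx w) 0 j * D w 0 j)%:E
      = \int[P]_w ((Y w 0 j - Zb w 0 j) * D w 0 j + (Zb w - Jx w) 0 j * D w 0 j)%:E)%E.
    by apply: eq_integral => w _; rewrite !mxE; congr EFin; ring.
  have YZD_int : P.-integrable setT (EFin \o (fun w => (Y w 0 j - Zb w 0 j) * D w 0 j)).
    apply: eq_integrable (integrableB measurableT (YJD_int j) (ZJD_int j)) => // w _.
    by rewrite /= !mxE -EFinB; congr EFin; ring.
  rewrite integralD_real // (cond_exp_pull_out P FkS (Y_int j) (Zb_ce j) (FD j)) // add0e.
  over.
rewrite -integral_dotv // ae_le_integral //; first exact: measurable_dotv.
- exact: measurable_funM (measurable_normv mD) meb.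
- apply: filterS Zb_le => w Zb_le; rewrite (le_trans (dotv_le_normv _ _)) // mulrC.
  by rewrite ler_wpM2l ?normv_ge0.
- by apply: filterS Zb_le => w /(le_trans (normv_ge0 _)); exact: mulr_ge0 (normv_ge0 _).
Qed.

(** * The inexact relaxed resolvent iteration *)

Lemma sume_ord_eqy {R : realType} {n : nat} (f : nat -> \bar R) k : (k < n)%N ->
  (forall i, 0 <= f i)%E -> f k = +oo%E -> (\sum_(i < n) f i = +oo)%E.
Proof.
move=> lt_kn f_ge0 fk; apply/eqP; rewrite esum_eqy => [|i _].
  by apply/existsP; exists (Ordinal lt_kn); rewrite fk.
by rewrite gt_eqF // (lt_le_trans ltNy0).
Qed.

Section InexactRelaxedResolvent.
Context {R : realType} {d : nat} {dd : measure_display} {T : measurableType dd}.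
Variable P : probability T R.
Variables (J : 'rV[R]_d -> 'rV[R]_d) (xstar x0 : 'rV[R]_d).
Variables (x Jt : nat -> T -> 'rV[R]_d) (eps_v eps_b : nat -> T -> R).
Variables (alpha : R) (a : nat -> R).

Hypotheses (a_gt0 : forall k, 0 < a k) (a_le : forall k, a k <= alpha).
Hypothesis J_residual :
  forall z, alpha * dotv (z - J z) (z - J z) <= dotv (z - J z) (z - xstar).
Hypotheses (x_0 : forall w, x 0%N w = x0)
  (x_S : forall k w, x k.+1 w = (1 - a k) *: x k w + a k *: Jt k w).
Hypotheses (Jt_int : forall k j, P.-integrable setT (fun w => (Jt k w 0 j)%:E))
  (mJx : forall k, measurable_rV (fun w => J (x k w))).
Hypotheses (Feps_v : forall k, sub_measurable (past_sigma x k) (eps_v k))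
  (Feps_b : forall k, sub_measurable (past_sigma x k) (eps_b k)).
Hypothesis variance_bound : forall k, exists Z : T -> R,
  is_cond_exp P (past_sigma x k) (fun w => normv (Jt k w - J (x k w)) ^+ 2) Z /\
  {ae P, forall w, Z w <= eps_v k w ^+ 2}.
Hypothesis bias_bound : forall k, exists Z : T -> 'rV[R]_d,
  (forall j, is_cond_exp P (past_sigma x k) (fun w => Jt k w 0 j) (fun w => Z w 0 j)) /\
  {ae P, forall w, normv (Z w - J (x k w)) <= eps_b k w}.

Local Notation dist k w := (x k w - xstar).
Local Notation res k w := (x k w - J (x k w)).
Local Notation err k w := (Jt k w - J (x k w)).

Local Notation residual_term k :=
  ((alpha / 4 * a k)%:E * \int[P]_w ((normv (x k w - J (x k w)) ^+ 2)%:E))%E.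
Local Notation variance_term k := ((3 / 2 * a k ^+ 2)%:E * \int[P]_w ((eps_v k w ^+ 2)%:E))%E.
Local Notation bias_term k :=
  ((a k)%:E * \int[P]_w ((normv (x k w - xstar) * eps_b k w)%:E))%E.
Local Notation finite_errors k :=
  ((\int[P]_w (eps_v k w ^+ 2)%:E < +oo)%E /\
   (\int[P]_w (normv (dist k w) * eps_b k w)%:E < +oo)%E).

Let alpha_gt0 : 0 < alpha. Proof. exact: lt_le_trans (a_gt0 0) (a_le 0). Qed.

Let mJt k : measurable_rV (Jt k).
Proof. by move=> j; exact/measurable_EFinP/(measurable_int _ (Jt_int k j)). Qed.

Lemma measurable_iterate k : measurable_rV (x k).
Proof.
elim: k => [|k mxk] j.
  rewrite (_ : (fun w => _) = cst (x0 0 j)); first exact: measurable_cst.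
  by apply/funext => w; rewrite x_0.
rewrite (_ : (fun w => _) = (fun w => (1 - a k) * x k w 0 j + a k * Jt k w 0 j)).
  by apply: measurable_funD; apply: measurable_funM => //; exact: mJt.
by apply/funext => w; rewrite x_S !mxE.
Qed.

Lemma past_sigma_measurable k : past_sigma x k `<=` measurable.
Proof.
apply: smallest_sub; first exact: sigma_algebra_measurable.
move=> _ [i [j [B [_ [mB ->]]]]].
by rewrite -[_ @^-1` _]setTI; exact: measurable_iterate.
Qed.

Lemma past_sigma_setT k : past_sigma x k setT.
Proof.
have [F0 FD _] := smallest_sigma_algebra setT (gen_sets x k).
by rewrite -(setD0 setT); exact: FD.
Qed.

Lemma sub_measurable_dist k j : sub_measurable (past_sigma x k) (fun w => dist k w 0 j).
Proof.
rewrite (_ : (fun w => _) = (fun r => r - xstar 0 j) \o (fun w => x k w 0 j)).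
  apply: sub_measurable_comp; last exact: measurable_funB.
  by move=> B mB; apply: sub_sigma_algebra; exists k, j, B.
by apply/funext => w; rewrite /= !mxE.
Qed.

Lemma dist_succE k w : dist k.+1 w = dist k w - a k *: (res k w - err k w).
Proof. by apply/rowP => j; rewrite x_S !mxE; ring. Qed.

Lemma expected_err_sqr_le k :
  (\int[P]_w (normv (err k w) ^+ 2)%:E <= \int[P]_w (eps_v k w ^+ 2)%:E)%E.
Proof.
have [Z [Z_ce Z_le]] := variance_bound k.
apply: (cond_exp_integral_le P (past_sigma_measurable k) (past_sigma_setT k) Z_ce).
- exact/measurable_funX/(sub_measurable_fun (past_sigma_measurable k) (Feps_v k)).
- by move=> w; exact: sqr_ge0.
- exact: Z_le.
Qed.

Section Step.
Variable k : nat.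
Hypothesis dist_int : P.-integrable setT (EFin \o (fun w => normv (dist k w) ^+ 2)).
Hypotheses (eps_v_fin : (\int[P]_w (eps_v k w ^+ 2)%:E < +oo)%E)
  (eps_b_fin : (\int[P]_w (normv (dist k w) * eps_b k w)%:E < +oo)%E).

Let mdist : measurable_rV (fun w => dist k w).
Proof. by apply: measurable_rVB (measurable_iterate k) _ => j; exact: measurable_cst. Qed.

Let merr : measurable_rV (fun w => err k w).
Proof. exact: measurable_rVB (mJt k) (mJx k). Qed.

Let mres : measurable_rV (fun w => res k w).
Proof. exact: measurable_rVB (measurable_iterate k) (mJx k). Qed.

Let dotv_dist_int : P.-integrable setT (EFin \o (fun w => dotv (dist k w) (dist k w))).
Proof. by apply: eq_integrable dist_int => // w _; rewrite /= normv_sqr. Qed.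

Lemma integrable_err_sqr : P.-integrable setT (EFin \o (fun w => normv (err k w) ^+ 2)).
Proof.
apply: integrable_ae_ge0; first exact/measurable_funX/measurable_normv.
  by apply: aeW => w; exact: sqr_ge0.
exact: le_lt_trans (expected_err_sqr_le k) eps_v_fin.
Qed.

Let dotv_err_int : P.-integrable setT (EFin \o (fun w => dotv (err k w) (err k w))).
Proof. by apply: eq_integrable integrable_err_sqr => // w _; rewrite /= normv_sqr. Qed.

Lemma integrable_dist_succ_sqr :
  P.-integrable setT (EFin \o (fun w => normv (dist k.+1 w) ^+ 2)).
Proof.
have comb_int := integrableD_real P (integrableZl_real P (1 + a k) dist_int)
  (integrableZl_real P (3 * a k ^+ 2 + a k) integrable_err_sqr).
apply: le_integrable comb_int => //.
  apply/measurable_EFinP/measurable_funX/measurable_normv/measurable_rVB.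
    exact: measurable_iterate.
  by move=> j; exact: measurable_cst.
move=> w _; rewrite /= lee_fin !ger0_norm ?sqr_ge0 //; last first.
  by apply: addr_ge0; apply: mulr_ge0; rewrite ?sqr_ge0 //; have := a_gt0 k; nra.
rewrite !normv_sqr dist_succE.
exact: relaxed_step_sqr_le (ltW (a_gt0 k)) (a_le k) (J_residual _).
Qed.

Lemma expected_cross_le :
  (\int[P]_w (dotv (err k w) (dist k w))%:E
    <= \int[P]_w (normv (dist k w) * eps_b k w)%:E)%E.
Proof.
have [Z [Z_ce Z_le]] := bias_bound k.
apply: (cond_exp_dotv_le P (past_sigma_measurable k) (Jt_int k) (mJx k) Z_ce) => //.
- exact: sub_measurable_dist.
- exact: sub_measurable_fun (past_sigma_measurable k) (Feps_b k).
Qed.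

Lemma expected_step :
  ((2^-1)%:E * \int[P]_w (normv (dist k.+1 w) ^+ 2)%:E + residual_term k
   <= (2^-1)%:E * \int[P]_w (normv (dist k w) ^+ 2)%:E + variance_term k + bias_term k)%E.
Proof.
have [ak_gt0 ak_le] := (a_gt0 k, a_le k).
have mdist_sqr k' : measurable_fun setT (fun w => normv (dist k' w) ^+ 2).
  apply/measurable_funX/measurable_normv/measurable_rVB; first exact: measurable_iterate.
  by move=> j; exact: measurable_cst.
have merr_sqr : measurable_fun setT (fun w => normv (err k w) ^+ 2).
  exact/measurable_funX/measurable_normv.
have mres_sqr : measurable_fun setT (fun w => normv (res k w) ^+ 2).
  exact/measurable_funX/measurable_normv.
have mcross := measurable_dotv merr mdist.
have cross_int := integrable_dotv P merr mdist dotv_err_int dotv_dist_int.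
have err_int := integrable_err_sqr.
have coef_ge0 : 0 <= alpha / 4 * a k by rewrite mulr_ge0 ?divr_ge0 // ltW.
rewrite -ge0_integral_comb2 // => [|w|w]; last 2 first.
- exact: sqr_ge0.
- exact: sqr_ge0.
apply: (@le_trans _ _ (\int[P]_w (2^-1 * normv (dist k w) ^+ 2
    + 3 / 2 * a k ^+ 2 * normv (err k w) ^+ 2 + a k * dotv (err k w) (dist k w))%:E)%E).
  apply: ge0_le_integral => //.
  - by move=> w _; rewrite lee_fin addr_ge0 // mulr_ge0 ?sqr_ge0 ?invr_ge0 //.
  - apply/measurable_EFinP/measurable_funD; apply: measurable_funM => //;
      exact: measurable_cst.
  - apply/measurable_EFinP/measurable_funD; [apply: measurable_funD|];
      apply: measurable_funM => //; exact: measurable_cst.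
  move=> w _; rewrite lee_fin !normv_sqr dist_succE.
  exact: relaxed_step_le (ltW ak_gt0) ak_le (J_residual _).
rewrite integralD_real; last 2 first.
- exact: integrableD_real (integrableZl_real P 2^-1 dist_int)
    (integrableZl_real P (3 / 2 * a k ^+ 2) err_int).
- exact: (integrableZl_real P (a k) cross_int).
rewrite integralD_real; last 2 first.
- exact: (integrableZl_real P 2^-1 dist_int).
- exact: (integrableZl_real P (3 / 2 * a k ^+ 2) err_int).
rewrite !integralZl_real //.
apply: leeD; first apply: leeD => //.
- by apply: lee_wpmul2l; [rewrite lee_fin mulr_ge0 ?sqr_ge0 | exact: expected_err_sqr_le].
- by apply: lee_wpmul2l; [rewrite lee_fin ltW | exact: expected_cross_le].
Qed.

End Step.

Lemma variance_term_ge0 k : (0 <= variance_term k)%E.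
Proof.
rewrite mule_ge0 ?integral_ge0 // => [|w _]; last by rewrite lee_fin sqr_ge0.
by rewrite lee_fin mulr_ge0 // sqr_ge0.
Qed.

Lemma bias_term_ge0 k : (0 <= bias_term k)%E.
Proof.
rewrite mule_ge0 ?lee_fin ?(ltW (a_gt0 k)) //.
have [Z [_ Z_le]] := bias_bound k.
apply: integral_ae_ge0.
  apply: measurable_funM; last exact: sub_measurable_fun (past_sigma_measurable k) (Feps_b k).
  apply/measurable_normv/measurable_rVB; first exact: measurable_iterate.
  by move=> j; exact: measurable_cst.
by apply: filterS Z_le => w /(le_trans (normv_ge0 _)); exact: mulr_ge0 (normv_ge0 _).
Qed.

Lemma telescoped_bound n : (forall k, (k < n)%N -> finite_errors k) ->
  P.-integrable setT (EFin \o (fun w => normv (dist n w) ^+ 2)) /\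
  ((2^-1)%:E * \int[P]_w (normv (dist n w) ^+ 2)%:E + \sum_(k < n) residual_term k
   <= (2^-1 * normv (x0 - xstar) ^+ 2)%:E
      + \sum_(k < n) variance_term k + \sum_(k < n) bias_term k)%E.
Proof.
elim: n => [_|n IH fin].
  have dist0 w : normv (dist 0 w) ^+ 2 = normv (x0 - xstar) ^+ 2 by rewrite x_0.
  split.
    apply: eq_integrable (finite_measure_integrable_cst P _ measurableT) => //.
    by move=> w _; rewrite /= dist0.
  rewrite !big_ord0 !adde0 (eq_integral (cst (normv (x0 - xstar) ^+ 2)%:E)).
    have P1 : (P : {measure set T -> \bar R}) [set: T] = 1%E by exact: probability_setT.
    by rewrite integral_cst // P1 mule1.
  by move=> w _; rewrite dist0.
have [dist_int IHle] := IH (fun k lt_kn => fin k (ltnW lt_kn)).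
have [eps_v_fin eps_b_fin] := fin n (ltnSn n).
split; first exact: integrable_dist_succ_sqr.
rewrite !big_ord_recr /= addeCA.
apply: le_trans (leeD2l _ (expected_step n dist_int eps_v_fin eps_b_fin)) _.
move: IHle; set SL := \sum_(i < n) _; set SV := \sum_(i < n) _; set SB := \sum_(i < n) _.
set D0 := ((2^-1)%:E * _)%E; set c := (_ * _)%:E => IHle.
rewrite !addeA (addeC SL D0) (addeAC (c + SV) (variance_term n) SB).
by apply: leeD2r; apply: leeD2r.
Qed.

Lemma error_sums_eqy K : ~ (forall k, (k < K)%N -> finite_errors k) ->
  ((2^-1 * normv (x0 - xstar) ^+ 2)%:E
     + \sum_(k < K) variance_term k + \sum_(k < K) bias_term k = +oo)%E.
Proof.
have nNy (y : \bar R) : (0 <= y)%E -> y != -oo%E.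
  by move=> y_ge0; rewrite gt_eqF // (lt_le_trans ltNy0).
have c_ge0 : (0 <= (2^-1 * normv (x0 - xstar) ^+ 2)%:E)%E.
  by rewrite lee_fin mulr_ge0 ?sqr_ge0.
have SV_ge0 : (0 <= \sum_(k < K) variance_term k)%E.
  by rewrite sume_ge0 // => k _; exact: variance_term_ge0.
have SB_ge0 : (0 <= \sum_(k < K) bias_term k)%E.
  by rewrite sume_ge0 // => k _; exact: bias_term_ge0.
move=> /existsNP[k /not_implyP[lt_kK /not_andP[]]]; rewrite ltey => /negP /negbNE/eqP.
- move=> int_eqy.
  rewrite (@sume_ord_eqy _ _ (fun k => variance_term k) k) ?addey ?addye ?nNy //.
  + exact: variance_term_ge0.
  + by rewrite int_eqy muleC gt0_mulye // lte_fin mulr_gt0 // exprn_gt0.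
- move=> int_eqy.
  rewrite (@sume_ord_eqy _ _ (fun k => bias_term k) k) ?addey ?nNy ?adde_ge0 //.
  + exact: bias_term_ge0.
  + by rewrite int_eqy muleC gt0_mulye // lte_fin.
Qed.

Theorem inexact_relaxed_resolvent_bound K :
  (\sum_(k < K) residual_term k
   <= (2^-1 * normv (x0 - xstar) ^+ 2)%:E
      + \sum_(k < K) variance_term k + \sum_(k < K) bias_term k)%E.
Proof.
have [fin|infin] := pselect (forall k, (k < K)%N -> finite_errors k).
  have [_ bound] := telescoped_bound K fin; apply: le_trans bound.
  by rewrite leeDr // mule_ge0 ?lee_fin // integral_ge0 // => w _; rewrite lee_fin sqr_ge0.
by rewrite error_sums_eqy // leey.
Qed.

End InexactRelaxedResolvent.

Theorem lemmaC8 (R : realType) (d : nat)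
  (F : 'rV[R]_d -> 'rV[R]_d) (G : setop R d) (L rho eta : R)
  (xstar : 'rV[R]_d) (J : 'rV[R]_d -> 'rV[R]_d)
  (dd : measure_display) (T : measurableType dd) (P : probability T R)
  (x0 : 'rV[R]_d) (x : nat -> T -> 'rV[R]_d) (Jt : nat -> T -> 'rV[R]_d)
  (eps_v eps_b : nat -> T -> R) (K : nat) :
  lipschitz_with L F ->
  maximally_monotone G ->
  (exists z, add_op F G z 0) ->
  add_op F G xstar 0 ->
  (forall z u, add_op F G z u -> dotv u (z - xstar) >= - rho * dotv u u) ->
  0 < rho -> rho < eta ->
  (* J is the resolvent J_{eta(F+G)} *)
  (forall z, resolvent_at eta (add_op F G) z (J z)) ->
  let alpha := 1 - rho / eta in
  let alpha_k := fun k : nat =>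
    alpha / (Num.sqrt (k%:R + 2) * ln (k%:R + 3)) in
  (* iterates *)
  (forall w, x 0%N w = x0) ->
  (forall k w, x k.+1 w = (1 - alpha_k k) *: x k w + alpha_k k *: Jt k w) ->
  (* measurability / integrability making the expectations meaningful *)
  (forall k j, P.-integrable setT (fun w => (Jt k w 0 j)%:E)) ->
  (forall k j, measurable_fun setT (fun w => J (x k w) 0 j)) ->
  (* eps_{k,v}, eps_{k,b} are measurable w.r.t. sigma(x_0, ..., x_k) *)
  (forall k, sub_measurable (past_sigma x k) (eps_v k)) ->
  (forall k, sub_measurable (past_sigma x k) (eps_b k)) ->
  (* E_k || Jt_k - J(x_k) ||^2 <= eps_{k,v}^2 *)
  (forall k, exists Z : T -> R,
     is_cond_exp P (past_sigma x k)
       (fun w => normv (Jt k w - J (x k w)) ^+ 2) Z /\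
     {ae P, forall w, Z w <= eps_v k w ^+ 2}) ->
  (* || E_k [Jt_k] - J(x_k) || <= eps_{k,b} *)
  (forall k, exists Z : T -> 'rV[R]_d,
     (forall j, is_cond_exp P (past_sigma x k)
                  (fun w => Jt k w 0 j) (fun w => Z w 0 j)) /\
     {ae P, forall w, normv (Z w - J (x k w)) <= eps_b k w}) ->
  (\sum_(k < K) ((alpha / 4 * alpha_k k)%:E *
       \int[P]_w ((normv (x k w - J (x k w)) ^+ 2)%:E))
   <= (2^-1 * normv (x0 - xstar) ^+ 2)%:E
      + \sum_(k < K) ((3 / 2 * alpha_k k ^+ 2)%:E *
            \int[P]_w ((eps_v k w ^+ 2)%:E))
      + \sum_(k < K) ((alpha_k k)%:E *
            \int[P]_w ((normv (x k w - xstar) * eps_b k w)%:E)))%E.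
Proof.
move=> _ _ _ _ minty rho_gt0 rho_lt_eta J_res alpha alpha_k x_0 x_S Jt_int mJx.
move=> Feps_v Feps_b variance_bound bias_bound.
have eta_gt0 : 0 < eta := lt_trans rho_gt0 rho_lt_eta.
have alpha_gt0 : 0 < alpha by rewrite subr_gt0 ltr_pdivrMr // mul1r.
have denom_ge1 k := sqrt_mul_ln_ge1 (R := R) k.
apply: inexact_relaxed_resolvent_bound => // [k|k|z].
- by rewrite /alpha_k divr_gt0 // (lt_le_trans ltr01).
- by rewrite /alpha_k ler_pdivrMr ?(lt_le_trans ltr01) // ler_peMr // ltW.
- exact: resolvent_residual_le eta_gt0 minty (J_res z).
Qed.
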